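(* Let $(a_n)_{n\in\mathbb{N}}$ be a C-finite sequence over $\mathbb{C}$. Let $c\in\mathbb{N}^{+}$ and $d,e\in\mathbb{Z}$. Then the sequence $b_n=a_{c\binom{n}{2}+dn+e}$ (defined for all $n$ large enough that the index is nonnegative) is C$^2$-finite over $\mathbb{C}$. In particular, $(a_{n^2})_n$ and $(a_{\binom{n}{2}})_n$ are C$^2$-finite.
   Context: Let $\mathbb{K}$ be a field. A sequence $(a_n)_{n\in\mathbb{N}}$ over $\mathbb{K}$ is C-finite if there exist $s\in\mathbb{N}$ and constants $c^{(0)},\dots,c^{(s-1)}\in\mathbb{K}$ such that $a_{n+s}=c^{(s-1)}a_{n+s-1}+\dots+c^{(0)}a_n$ for every $n\ge s$. A sequence $(a_n)$ over $\mathbb{K}$ is C$^2$-finite if there exist $s\in\mathbb{N}$ and C-finite sequences $(c^{(0)}_n),\dots,(c^{(s)}_n)$ over $\mathbb{K}$ with $c^{(s)}_n\neq 0$ for every $n$, such that $c^{(s)}_n a_{n+s}=c^{(s-1)}_n a_{n+s-1}+\dots+c^{(0)}_n a_n$ for every $n\ge s$. *)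

From HB Require Import structures.
From mathcomp Require Import all_boot all_order all_algebra.
Set Implicit Arguments. Unset Strict Implicit. Unset Printing Implicit Defensive.
Import Order.TTheory GRing.Theory Num.Theory.
Local Open Scope ring_scope.

Definition Cfinite (K : fieldType) (a : nat -> K) : Prop :=
  exists (s : nat) (c : 'I_s -> K),
    forall n : nat, (s <= n)%N ->
      a (n + s)%N = \sum_(i < s) c i * a (n + i)%N.

Definition C2finite (K : fieldType) (a : nat -> K) : Prop :=
  exists (s : nat) (cs : nat -> K) (c : 'I_s -> nat -> K),
    Cfinite cs /\ (forall i, Cfinite (c i)) /\ (forall n, cs n != 0) /\
    forall n : nat, (s <= n)%N ->
      cs n * a (n + s)%N = \sum_(i < s) c i n * a (n + i)%N.

Definition quad_index (c : nat) (d e : int) (n : nat) : int :=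
  (c * 'C(n, 2))%:Z + d * n%:Z + e.

From HB Require Import structures.
From mathcomp Require Import all_boot all_order all_algebra.
From mathcomp.real_closed Require Import mxtens.
From mathcomp Require Import zify ring.
Import Order.TTheory GRing.Theory Num.Theory.
Set Implicit Arguments. Unset Strict Implicit. Unset Printing Implicit Defensive.
Local Open Scope ring_scope.

(* Let q n = c C(n,2) + d n + e.  The proof works with matrix-power
   sequences: sequences that, from some index N on, are of the form
   n |-> x M^(n-N) y.  These are exactly the C-finite sequences, and they
   are closed under sums, products (Kronecker product), shifts and affine
   reindexing n |-> p n + r.

   Main lemma ([quad_power_rec]): over an algebraically closed field, for a
   square matrix M, a row vector w and a column sequence u with matrix-power
   entries, g n = w M^(q n) u n eventually satisfies a monic recurrence whose
   coefficients are matrix-power sequences.  The proof is by induction on the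
   size of M.  Take an eigenvalue l of M; the row space of M - l is a proper
   M-invariant subspace.  Write M^t = l^t + (M - l) F_t, let u satisfy
   u (n + k) = sum_i chi_i u (n + i), and use that q (n + j) - q n is affine
   in n: then g (n + k) - sum_i chi_i l^(q(n+k)-q(n+i)) g (n + i) has the same
   shape for the restriction M' of M to that subspace, so satisfies a
   recurrence by induction, and composing the two recurrences gives one for g.

   A monic recurrence with C-finite coefficients is a C^2-finite one, and
   integer d, e are reduced to natural ones by shifting n. *)

Definition eventually (P : nat -> Prop) : Prop :=
  exists N, forall n, (N <= n)%N -> P n.

Section MatrixPowerSequences.
Variable K : fieldType.

Lemma mulmx_expD k (M : 'M[K]_k) a b : M ^+ a *m M ^+ b = M ^+ (a + b).
Proof. by rewrite mulmxE exprD. Qed.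

Definition mxpow_from (f : nat -> K) (N : nat) : Prop :=
  exists k (M : 'M[K]_k) (x : 'rV[K]_k) (y : 'cV[K]_k),
    forall n, (N <= n)%N -> f n = (x *m M ^+ (n - N) *m y) 0 0.

(* Matrix-power sequences; they are exactly the C-finite sequences (see
   [mxpow_seq_Cfinite] and [Cfinite_mxpow_seq]), but are easier to combine. *)
Definition mxpow_seq (f : nat -> K) : Prop := exists N, mxpow_from f N.

Lemma mxpow_from_le f N N' : mxpow_from f N -> (N <= N')%N -> mxpow_from f N'.
Proof.
move=> [k [M [x [y H]]]] hN.
exists k, M, (x *m M ^+ (N' - N)), y => n hn.
rewrite H ?(leq_trans hN hn) // -[x *m M ^+ (N' - N) *m _]mulmxA mulmx_expD.
by congr (_ _ _ _); congr (_ *m _ *m _); congr (_ ^+ _); lia.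
Qed.

Lemma mxpow_seq_ev f g :
  mxpow_seq f -> eventually (fun n => f n = g n) -> mxpow_seq g.
Proof.
move=> [N0 hf] [N' H'].
have [k [M [x [y H]]]] := mxpow_from_le hf (leq_maxl N0 N').
exists (maxn N0 N'), k, M, x, y => n hn.
by rewrite -H' ?H // (leq_trans (leq_maxr N0 N') hn).
Qed.

Lemma mxpow_seq_const c : mxpow_seq (fun _ => c).
Proof.
exists 0%N, 1%N, 1, c%:M, 1 => n _.
by rewrite expr1n mulmx1 mulmx1 mxE eqxx mulr1n.
Qed.

Lemma mxpow_seq_shift f j : mxpow_seq f -> mxpow_seq (fun n => f (n + j)%N).
Proof.
move=> [N [k [M [x [y H]]]]].
exists N, k, M, (x *m M ^+ j), y => n hn.
rewrite H ?(leq_trans hn (leq_addr _ _)) // -[x *m M ^+ j *m _]mulmxA mulmx_expD.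
by congr (_ _ _ _); congr (_ *m _ *m _); congr (_ ^+ _); lia.
Qed.

Lemma mxpow_seq_unshift f j : mxpow_seq f -> mxpow_seq (fun n => f (n - j)%N).
Proof.
move=> [N [k [M [x [y H]]]]].
exists (N + j)%N, k, M, x, y => n hn.
rewrite H; last by lia.
by congr (_ _ _ _); congr (_ *m _ *m _); congr (_ ^+ _); lia.
Qed.

(* Affine reindexing [n |-> p n + r]: replace [M] by [M^p]. *)
Lemma mxpow_seq_affine f p r : mxpow_seq f -> mxpow_seq (fun n => f (p * n + r)%N).
Proof.
move=> hf; case: p => [|p].
  apply: (@mxpow_seq_ev (fun _ => f r)); first exact: mxpow_seq_const.
  by exists 0%N => n _; rewrite mul0n.
move: hf => [N [k [M [x [y H]]]]].
exists N, k, (M ^+ p.+1), (x *m M ^+ (p.+1 * N + r - N)), y => n hn.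
rewrite H; last by nia.
rewrite -exprM -[x *m M ^+ (p.+1 * N + r - N) *m _]mulmxA mulmx_expD.
by congr (_ _ _ _); congr (_ *m _ *m _); congr (_ ^+ _); nia.
Qed.

Lemma expmx_block_diag k1 k2 (A : 'M[K]_k1) (B : 'M[K]_k2) n :
  (block_mx A 0 0 B : 'M_(k1 + k2)) ^+ n = block_mx (A ^+ n) 0 0 (B ^+ n).
Proof.
elim: n => [|n IH]; first by rewrite !expr0 -scalar_mx_block.
by rewrite !exprS IH -!mulmxE mulmx_block !(mulmx0, mul0mx, addr0, add0r).
Qed.

(* Sums are realized by block-diagonal matrices. *)
Lemma mxpow_seq_add f g : mxpow_seq f -> mxpow_seq g -> mxpow_seq (fun n => f n + g n).
Proof.
move=> [N1 hf] [N2 hg].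
have [k1 [M1 [x1 [y1 H1]]]] := mxpow_from_le hf (leq_maxl N1 N2).
have [k2 [M2 [x2 [y2 H2]]]] := mxpow_from_le hg (leq_maxr N1 N2).
exists (maxn N1 N2), (k1 + k2)%N, (block_mx M1 0 0 M2), (row_mx x1 x2), (col_mx y1 y2).
move=> n hn.
rewrite expmx_block_diag mul_row_block !(mulmx0, mul0mx, addr0, add0r) mul_row_col.
by rewrite mxE H1 // H2.
Qed.

Lemma tensmx11 m p : (1 : 'M[K]_m) *t (1 : 'M[K]_p) = 1.
Proof.
apply/matrixP=> i j.
case: (mxtens_indexP i) => i1 i2; case: (mxtens_indexP j) => j1 j2.
rewrite tensmxE !mxE (inj_eq (can_inj (@mxtens_indexK _ _))) xpair_eqE.
by case: (i1 == j1); case: (i2 == j2); rewrite ?mulr1 ?mulr0.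
Qed.

Lemma tensmx_exp m p (A : 'M[K]_m) (B : 'M[K]_p) n :
  (A *t B) ^+ n = A ^+ n *t B ^+ n.
Proof.
elim: n => [|n IH]; first by rewrite !expr0 tensmx11.
by rewrite !exprS IH -!mulmxE tensmx_mul.
Qed.

(* Products are realized by Kronecker products. *)
Lemma mxpow_seq_mul f g : mxpow_seq f -> mxpow_seq g -> mxpow_seq (fun n => f n * g n).
Proof.
move=> [N1 hf] [N2 hg].
have [k1 [M1 [x1 [y1 H1]]]] := mxpow_from_le hf (leq_maxl N1 N2).
have [k2 [M2 [x2 [y2 H2]]]] := mxpow_from_le hg (leq_maxr N1 N2).
exists (maxn N1 N2), (k1 * k2)%N, (M1 *t M2), (x1 *t x2), (y1 *t y2) => n hn.
set t := (n - _)%N.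
have tens_entry : (x1 *t x2) *m (M1 ^+ t *t M2 ^+ t) *m (y1 *t y2)
   = (x1 *m M1 ^+ t *m y1) *t (x2 *m M2 ^+ t *m y2) by rewrite !tensmx_mul.
rewrite tensmx_exp H1 // H2 // -(tensmxE (x1 *m M1 ^+ t *m y1)) -tens_entry.
by have -> : (mxtens_index ((0 : 'I_1), (0 : 'I_1)) : 'I_(1 * 1)) = ord0
  by apply: val_inj.
Qed.

Lemma mxpow_seq_scale c f : mxpow_seq f -> mxpow_seq (fun n => c * f n).
Proof. by move=> hf; apply: mxpow_seq_mul => //; exact: mxpow_seq_const. Qed.

Lemma mxpow_seq_opp f : mxpow_seq f -> mxpow_seq (fun n => - f n).
Proof.
move=> hf; apply: (@mxpow_seq_ev (fun n => -1 * f n)); first exact: mxpow_seq_scale.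
by exists 0%N => n _; rewrite mulN1r.
Qed.

Lemma mxpow_seq_sum (I : Type) (r : seq I) (F : I -> nat -> K) :
  (forall i, List.In i r -> mxpow_seq (F i)) ->
  mxpow_seq (fun n => \sum_(i <- r) F i n).
Proof.
elim: r => [|i r IH] hF.
  apply: (@mxpow_seq_ev (fun _ => 0)); first exact: mxpow_seq_const.
  by exists 0%N => n _; rewrite big_nil.
apply: (@mxpow_seq_ev (fun n => F i n + \sum_(j <- r) F j n)).
  by apply: mxpow_seq_add; [apply: hF; left | apply: IH => j hj; apply: hF; right].
by exists 0%N => n _; rewrite big_cons.
Qed.

Lemma mxpow_seq_entry a b k (A : 'M[K]_(a, k)) (M : 'M[K]_k) (B : 'M[K]_(k, b)) i j :
  mxpow_seq (fun n => (A *m M ^+ n *m B) i j).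
Proof.
exists 0%N, k, M, (row i A), (col j B) => n _.
by rewrite subn0 colE mulmxA -colE -!row_mul !mxE.
Qed.

Lemma mxpow_seq_geom (l : K) p r : mxpow_seq (fun n => l ^+ (p * n + r)).
Proof.
apply: (@mxpow_seq_affine (fun n => l ^+ n)).
exists 0%N, 1%N, l%:M, 1, 1 => n _.
rewrite mul1mx mulmx1 subn0.
have -> : (l%:M : 'M[K]_1) ^+ n = (l ^+ n)%:M.
  by elim: n => [|n IH]; rewrite ?expr0 // !exprS IH -mulmxE -scalar_mxM.
by rewrite mxE eqxx mulr1n.
Qed.

End MatrixPowerSequences.

Section Annihilation.
Variable K : fieldType.

Lemma char_poly_relation k (P : 'M[K]_k) :
  \sum_(i < k.+1) (char_poly P)`_i *: P ^+ i = 0.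
Proof.
case: k P => [|k] P; first by apply/matrixP => [[]].
have := Cayley_Hamilton P.
rewrite /horner_mx /horner_morph (@horner_coef_wide _ k.+2); last first.
  by rewrite size_map_poly size_char_poly.
move=> h; rewrite -[in RHS]h; apply: eq_bigr => i _.
by rewrite coef_map /= -mulmxE mul_scalar_mx.
Qed.

Lemma mxpow_recurrence a b k (U : 'M[K]_(a, k)) (P : 'M[K]_k) (Y : 'M[K]_(k, b))
    N (X : nat -> 'M[K]_(a, b)) :
  (forall n, (N <= n)%N -> X n = U *m P ^+ (n - N) *m Y) ->
  forall n, (N <= n)%N ->
    X (n + k)%N = \sum_(i < k) (- (char_poly P)`_i) *: X (n + i)%N.
Proof.
move=> HX n hn.
have chik : (char_poly P)`_k = 1.
  by have := char_poly_monic P; rewrite monicE lead_coefE size_char_poly => /eqP.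
have shiftX i : X (n + i)%N = U *m P ^+ (n - N) *m P ^+ i *m Y.
  rewrite HX ?(leq_trans hn (leq_addr _ _)) // -[U *m _ *m P ^+ i]mulmxA mulmx_expD.
  by do 2 congr (_ *m _); congr (_ ^+ _); lia.
have rel : \sum_(i < k.+1) (char_poly P)`_i *: X (n + i)%N
    = U *m P ^+ (n - N) *m (\sum_(i < k.+1) (char_poly P)`_i *: P ^+ i) *m Y.
  rewrite mulmx_sumr mulmx_suml; apply: eq_bigr => i _.
  by rewrite shiftX -scalemxAr -scalemxAl.
move: rel; rewrite char_poly_relation mulmx0 mul0mx; rewrite big_ord_recr /= chik scale1r addrC => /eqP.
rewrite addr_eq0 => /eqP ->; rewrite -sumrN; apply: eq_bigr => i _.
by rewrite scaleNr.
Qed.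

Lemma mxpow_seq_Cfinite (f : nat -> K) : mxpow_seq f -> Cfinite f.
Proof.
move=> [N [k [M [x [y H]]]]].
set chi := char_poly M.
have R n : (N <= n)%N -> f (n + k)%N = \sum_(i < k) (- chi`_i) * f (n + i)%N.
  move=> hn; rewrite H ?(leq_trans hn (leq_addr _ _)) //.
  rewrite (mxpow_recurrence (fun m hm => erefl (x *m M ^+ (m - N) *m y))) // summxE.
  apply: eq_bigr => i _; rewrite mxE H ?(leq_trans hn (leq_addr _ _)) //.
(* pad the recurrence of order [k] valid from [N] on into one of order [N + k] *)
exists (N + k)%N, (fun i : 'I_(N + k) => if (i < N)%N then 0 else - chi`_(i - N)).
move=> n hn.
rewrite big_split_ord /= big1 ?add0r; last by move=> i _; rewrite ltn_ord mul0r.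
rewrite addnA R; last by rewrite leq_addl.
apply: eq_bigr => i _; rewrite ltnNge leq_addr /=.
by rewrite (_ : (N + i - N = i)%N) ?addnA //; lia.
Qed.

(* C-finite sequences are matrix-power sequences: the window
   [(f m, ..., f (m + s - 1))] is multiplied by a companion matrix at each step. *)
Lemma Cfinite_mxpow_seq (f : nat -> K) : Cfinite f -> mxpow_seq f.
Proof.
move=> [s [cc H]].
case: s cc H => [|s] cc H.
  apply: (@mxpow_seq_ev _ (fun _ => 0)); first exact: mxpow_seq_const.
  by exists 0%N => n _; rewrite -[n]addn0 H // big_ord0.
pose R m := \row_(i < s.+1) f (m + i)%N.
pose C : 'M[K]_s.+1 :=
  \matrix_(i, j) (if (j.+1 < s.+1)%N then ((i : nat) == j.+1)%:R else cc i).
have RS m : (s.+1 <= m)%N -> R m.+1 = R m *m C.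
  move=> hm; apply/matrixP => i j; rewrite /R /C !mxE.
  have [hj|hj] := boolP (j.+1 < s.+1)%N.
    rewrite (eq_bigr (fun l : 'I_s.+1 => f (m + l)%N * ((l : nat) == j.+1)%:R));
      last by move=> l _; rewrite !mxE hj.
    rewrite (bigD1 (Ordinal hj)) //= eqxx mulr1 big1 ?addr0; first by rewrite addnS.
    move=> l hl; rewrite (_ : ((l : nat) == j.+1) = false) ?mulr0 //.
    apply/negP => /eqP hl'; move: hl; rewrite (_ : l = Ordinal hj) ?eqxx //.
    exact: val_inj.
  rewrite (eq_bigr (fun l : 'I_s.+1 => f (m + l)%N * cc l));
    last by move=> l _; rewrite !mxE (negPf hj).
  have -> : (j : nat) = s by move: (ltn_ord j) hj; rewrite ltnS; lia.
  rewrite addSnnS H //; apply: eq_bigr => l _; exact: mulrC.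
exists s.+1, s.+1, C, (R s.+1), (delta_mx 0 0) => n hn.
have -> : f n = (R n *m (delta_mx 0 0 : 'cV[K]_s.+1)) 0 0.
  by rewrite -colE !mxE addn0.
congr (_ _ _ _); congr (_ *m _).
rewrite -(subnK hn); elim: (n - s.+1)%N => [|p IHp].
  by rewrite add0n subnn expr0 mulmx1.
rewrite addSn RS ?leq_addl // IHp subSn ?leq_addl // exprSr -mulmxA mulmxE.
by rewrite (_ : (p + s.+1 - s.+1 = p)%N) // addnK.
Qed.

End Annihilation.

Section MatrixSequences.
Variable K : fieldType.

Definition mxpow_mx a b (X : nat -> 'M[K]_(a, b)) : Prop :=
  forall i j, mxpow_seq (fun n => X n i j).

Lemma mxpow_mx_ev a b (X Y : nat -> 'M[K]_(a, b)) :
  mxpow_mx X -> eventually (fun n => X n = Y n) -> mxpow_mx Y.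
Proof.
move=> hX [N hN] i j; apply: (mxpow_seq_ev (hX i j)).
by exists N => n hn; rewrite hN.
Qed.

Lemma mxpow_mx_const a b (A : 'M[K]_(a, b)) : mxpow_mx (fun _ => A).
Proof. by move=> i j; exact: mxpow_seq_const. Qed.

Lemma mxpow_mx_shift a b (X : nat -> 'M[K]_(a, b)) j :
  mxpow_mx X -> mxpow_mx (fun n => X (n + j)%N).
Proof. by move=> hX i l; exact: (mxpow_seq_shift j (hX i l)). Qed.

Lemma mxpow_mx_mul a b c (X : nat -> 'M[K]_(a, b)) (Y : nat -> 'M[K]_(b, c)) :
  mxpow_mx X -> mxpow_mx Y -> mxpow_mx (fun n => X n *m Y n).
Proof.
move=> hX hY i j.
apply: (@mxpow_seq_ev _ (fun n => \sum_(l <- index_enum 'I_b) X n i l * Y n l j)).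
  by apply: mxpow_seq_sum => l _; apply: mxpow_seq_mul.
by exists 0%N => n _; rewrite mxE.
Qed.

Lemma mxpow_mx_add a b (X Y : nat -> 'M[K]_(a, b)) :
  mxpow_mx X -> mxpow_mx Y -> mxpow_mx (fun n => X n + Y n).
Proof.
move=> hX hY i j; apply: (@mxpow_seq_ev _ (fun n => X n i j + Y n i j)).
  exact: mxpow_seq_add.
by exists 0%N => n _; rewrite mxE.
Qed.

Lemma mxpow_mx_scale a b (h : nat -> K) (X : nat -> 'M[K]_(a, b)) :
  mxpow_seq h -> mxpow_mx X -> mxpow_mx (fun n => h n *: X n).
Proof.
move=> hh hX i j; apply: (@mxpow_seq_ev _ (fun n => h n * X n i j)).
  exact: mxpow_seq_mul.
by exists 0%N => n _; rewrite mxE.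
Qed.

Lemma mxpow_mx_sum a b (I : Type) (r : seq I) (F : I -> nat -> 'M[K]_(a, b)) :
  (forall i, mxpow_mx (F i)) -> mxpow_mx (fun n => \sum_(i <- r) F i n).
Proof.
move=> hF i j; apply: (@mxpow_seq_ev _ (fun n => \sum_(l <- r) F l n i j)).
  by apply: mxpow_seq_sum => l _; apply: hF.
by exists 0%N => n _; rewrite summxE.
Qed.

Definition mxpow_col_from s (u : nat -> 'cV[K]_s) (N : nat) : Prop :=
  exists k (U : 'M[K]_(s, k)) (P : 'M[K]_k) (y : 'cV[K]_k),
    forall n, (N <= n)%N -> u n = U *m P ^+ (n - N) *m y.

Definition mxpow_col s (u : nat -> 'cV[K]_s) : Prop := exists N, mxpow_col_from u N.

Lemma mxpow_col_from_le s (u : nat -> 'cV[K]_s) N N' :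
  mxpow_col_from u N -> (N <= N')%N -> mxpow_col_from u N'.
Proof.
move=> [k [U [M [y H]]]] hN.
exists k, (U *m M ^+ (N' - N)), M, y => n hn.
rewrite H ?(leq_trans hN hn) // -[U *m M ^+ (N' - N) *m _]mulmxA mulmx_expD.
by congr (_ *m _ *m _); congr (_ ^+ _); lia.
Qed.

Lemma mxpow_col_ev s (u v : nat -> 'cV[K]_s) :
  mxpow_col u -> eventually (fun n => u n = v n) -> mxpow_col v.
Proof.
move=> [N0 hf] [N' H'].
have [k [M [x [y H]]]] := mxpow_col_from_le hf (leq_maxl N0 N').
exists (maxn N0 N'), k, M, x, y => n hn.
by rewrite -H' ?H // (leq_trans (leq_maxr N0 N') hn).
Qed.

Lemma mxpow_col_add s (u v : nat -> 'cV[K]_s) :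
  mxpow_col u -> mxpow_col v -> mxpow_col (fun n => u n + v n).
Proof.
move=> [N1 hf] [N2 hg].
have [k1 [U1 [M1 [y1 H1]]]] := mxpow_col_from_le hf (leq_maxl N1 N2).
have [k2 [U2 [M2 [y2 H2]]]] := mxpow_col_from_le hg (leq_maxr N1 N2).
exists (maxn N1 N2), (k1 + k2)%N, (row_mx U1 U2), (block_mx M1 0 0 M2), (col_mx y1 y2).
move=> n hn.
rewrite expmx_block_diag mul_row_block !(mulmx0, mul0mx, addr0, add0r) mul_row_col.
by rewrite H1 // H2.
Qed.

Lemma mxpow_col_scale s (h : nat -> K) (z : 'cV[K]_s) :
  mxpow_seq h -> mxpow_col (fun n => h n *: z).
Proof.
move=> [N [k [M [x [y H]]]]].
exists N, k, (z *m x), M, y => n hn.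
rewrite H // -!mulmxA [x *m _]mulmxA.
by rewrite [x *m M ^+ (n - N) *m y in RHS]mx11_scalar mul_mx_scalar.
Qed.

(* Entrywise representations combine into a single one, by expanding
   [u n] on the canonical basis. *)
Lemma mxpow_mx_col s (u : nat -> 'cV[K]_s) : mxpow_mx u -> mxpow_col u.
Proof.
move=> hu.
apply: (@mxpow_col_ev _ (fun n => \sum_(i <- index_enum 'I_s) u n i 0 *: delta_mx i 0)).
  elim: (index_enum _) => [|i r IH].
    apply: (@mxpow_col_ev _ (fun _ => 0 *: (0 : 'cV_s))).
      by apply: mxpow_col_scale; apply: mxpow_seq_const.
    by exists 0%N => n _; rewrite big_nil scaler0.
  apply: (@mxpow_col_ev _
    (fun n => u n i 0 *: delta_mx i 0 + \sum_(j <- r) u n j 0 *: delta_mx j 0)).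
    by apply: mxpow_col_add => //; apply: mxpow_col_scale; apply: hu.
  by exists 0%N => n _; rewrite big_cons.
exists 0%N => n _; rewrite [RHS]matrix_sum_delta.
by apply: eq_bigr => i _; rewrite big_ord1.
Qed.

Lemma mxpow_mx_recurrence s (u : nat -> 'cV[K]_s) : mxpow_mx u ->
  exists k (chi : 'I_k -> K),
    eventually (fun n => u (n + k)%N = \sum_(i < k) chi i *: u (n + i)%N).
Proof.
move=> /mxpow_mx_col [N [k [U [P [y H]]]]].
exists k, (fun i => - (char_poly P)`_i), N.
exact: mxpow_recurrence H.
Qed.

End MatrixSequences.

Section Recurrences.
Variable K : fieldType.

(* A recurrence of order [s] is given by a list of terms [(h, j)]: the
   coefficient sequence [h] multiplies the [j]-th shift, [j < s]. *)
Definition rec_terms (s : nat) (F : seq ((nat -> K) * nat)) : Prop :=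
  forall p, List.In p F -> mxpow_seq p.1 /\ (p.2 < s)%N.

Definition mxpow_rec (g : nat -> K) : Prop :=
  exists s N (F : seq ((nat -> K) * nat)), rec_terms s F /\
    forall n, (N <= n)%N -> g (n + s)%N = \sum_(p <- F) p.1 n * g (n + p.2)%N.

Lemma mxpow_rec_ev g h :
  mxpow_rec g -> eventually (fun n => g n = h n) -> mxpow_rec h.
Proof.
move=> [s [N [F [hF H]]]] [N' H'].
exists s, (maxn N N'), F; split => // n; rewrite geq_max => /andP[h1 h2].
rewrite -H' ?(leq_trans h2 (leq_addr _ _)) // H //.
by apply: eq_bigr => p _; rewrite H' // (leq_trans h2 (leq_addr _ _)).
Qed.

Lemma mxpow_rec_zero (g : nat -> K) : (forall n, g n = 0) -> mxpow_rec g.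
Proof. by move=> g0; exists 0%N, 0%N, [::]; split => // n _; rewrite big_nil g0. Qed.

Lemma mxpow_rec_unshift g k : mxpow_rec (fun n => g (n + k)%N) -> mxpow_rec g.
Proof.
move=> [s [N [F [hF H]]]].
exists s, (N + k)%N, [seq ((fun m => p.1 (m - k)%N), p.2) | p <- F]; split.
  move=> p /List.in_map_iff [q [<- hq]] /=; have [h1 h2] := hF q hq.
  by split => //; exact: mxpow_seq_unshift.
move=> m hm; rewrite big_map.
have := H (m - k)%N; rewrite (_ : (m - k + s + k = m + s)%N); last by lia.
move=> -> ; last by lia.
by apply: eq_bigr => p _ /=; congr (_ * g _); lia.
Qed.

Lemma In_allpairs (A B : Type) (SA : seq A) (SB : seq B) x :
  List.In x [seq (a, b) | a <- SA, b <- SB] -> List.In x.1 SA /\ List.In x.2 SB.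
Proof.
elim: SA => [|a SA IH] //= /List.in_app_iff [].
  by move=> /List.in_map_iff [b [<- hb]]; split => //; left.
by move=> /IH [h1 h2]; split => //; right.
Qed.

(* Composition of recurrences: if the residual [g (n + m) - \sum_(h, j) h n g (n + j)]
   of a recurrence [E] satisfies a recurrence [R], then substituting the
   residual into [R] gives a recurrence for [g] of order [s + m]. *)
Lemma mxpow_rec_compose g m (E : seq ((nat -> K) * nat)) : rec_terms m E ->
  mxpow_rec (fun n => g (n + m)%N - \sum_(p <- E) p.1 n * g (n + p.2)%N) ->
  mxpow_rec g.
Proof.
move=> hE [s [N [R [hR H]]]].
pose F1 := [seq (r.1, (r.2 + m)%N) | r <- R].
pose F2 := [seq ((fun n => - (rp.1.1 n * rp.2.1 (n + rp.1.2)%N)), (rp.1.2 + rp.2.2)%N)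
           | rp <- [seq (r, p) | r <- R, p <- E]].
pose F3 := [seq ((fun n => p.1 (n + s)%N), (s + p.2)%N) | p <- E].
exists (s + m)%N, N, (F1 ++ F2 ++ F3); split.
  move=> p /List.in_app_iff [|/List.in_app_iff []].
  - move=> /List.in_map_iff [r [<- hr]] /=; have [h1 h2] := hR r hr.
    by split => //; rewrite ltn_add2r.
  - move=> /List.in_map_iff [rp [<- /In_allpairs [hr hp]]] /=.
    have [h1 h2] := hR _ hr; have [h3 h4] := hE _ hp.
    split; first by apply/mxpow_seq_opp/mxpow_seq_mul => //; apply: mxpow_seq_shift.
    by rewrite -addSn leq_add // ltnW.
  - move=> /List.in_map_iff [q [<- hq]] /=; have [h1 h2] := hE _ hq.
    by split; [apply: mxpow_seq_shift | rewrite ltn_add2l].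
move=> n hn.
rewrite !big_cat /= !big_map big_allpairs /=.
have -> : g (n + (s + m))%N =
    (g (n + s + m)%N - \sum_(p <- E) p.1 (n + s)%N * g (n + s + p.2)%N)
    + \sum_(p <- E) p.1 (n + s)%N * g (n + s + p.2)%N by rewrite subrK addnA.
rewrite H // addrA; congr (_ + _); last by apply: eq_bigr => p _; rewrite addnA.
rewrite -big_split /=; apply: eq_bigr => r _.
rewrite mulrBr mulr_sumr -sumrN addnA; congr (_ + _).
by apply: eq_bigr => p _; rewrite /= mulNr mulrA addnA.
Qed.

Lemma sum_terms_by_shift s (F : seq ((nat -> K) * nat)) (G : nat -> K) n :
  (forall p, List.In p F -> (p.2 < s)%N) ->
  \sum_(p <- F) p.1 n * G p.2 =
    \sum_(i < s) (\sum_(p <- F | p.2 == (i : nat)) p.1 n) * G i.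
Proof.
elim: F => [|q F IH] hF.
  by rewrite big_nil big1 // => i _; rewrite big_nil mul0r.
rewrite big_cons IH; last by move=> p hp; apply: hF; right.
have hq : (q.2 < s)%N by apply: hF; left.
rewrite (bigD1 (Ordinal hq)) //= [in RHS](bigD1 (Ordinal hq)) //=.
rewrite (big_cons _ _ q) eqxx mulrDl -addrA; congr (_ + _); congr (_ + _).
apply: eq_bigr => i hi; rewrite big_cons.
rewrite (_ : (q.2 == i) = false) //; apply/negP => /eqP hqi; move: hi.
by rewrite (_ : i = Ordinal hq) ?eqxx //; apply: val_inj.
Qed.

(* A monic recurrence with C-finite coefficients makes [g] C^2-finite (with
   leading coefficient 1); zero coefficients pad it to hold from [N + s] on. *)
Lemma mxpow_rec_C2finite (g : nat -> K) : mxpow_rec g -> C2finite g.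
Proof.
move=> [s [N [F [hF H]]]].
have hF2 p : List.In p F -> (p.2 < s)%N by move=> /hF [].
pose co (i : 'I_(N + s)) n :=
  if (i < N)%N then 0 else \sum_(p <- F | p.2 == (i - N)%N) p.1 (n + N)%N.
exists (N + s)%N, (fun _ => 1), co; split; first exact/mxpow_seq_Cfinite/mxpow_seq_const.
split.
  move=> i; apply: mxpow_seq_Cfinite; rewrite /co; have [hi|hi] := boolP (i < N)%N.
    by apply: (mxpow_seq_ev (mxpow_seq_const 0)); exists 0%N.
  apply: (@mxpow_seq_ev _
    (fun n => \sum_(p <- [seq p <- F | p.2 == (i - N)%N]) p.1 (n + N)%N)).
    apply: mxpow_seq_sum => p /List.filter_In [hp _].
    exact/mxpow_seq_shift/(hF p hp).1.
  by exists 0%N => n _; rewrite big_filter.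
split; first by move=> n; exact: oner_neq0.
move=> n _.
rewrite mul1r big_split_ord /= big1 ?add0r; last first.
  by move=> i _; rewrite /co /= ltn_ord mul0r.
rewrite [(n + _)%N]addnA H ?leq_addl // (@sum_terms_by_shift s F (fun j => g (n + N + j)%N) _ hF2).
by apply: eq_bigr => i _; rewrite /co /= ltnNge leq_addr /= addKn addnA.
Qed.

End Recurrences.

Lemma bin2D n j : 'C(n + j, 2) = ('C(n, 2) + j * n + 'C(j, 2))%N.
Proof.
elim: j => [|j IH]; first by rewrite addn0 mul0n addn0 bin0n addn0.
rewrite addnS binS IH bin1 binS bin1; lia.
Qed.

Section QuadraticExponent.
Variables c d e : nat.

Definition quadn (n : nat) : nat := (c * 'C(n, 2) + d * n + e)%N.

Lemma quadn_mono : {homo quadn : m n / (m <= n)%N}.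
Proof.
move=> m n h; rewrite /quadn leq_add2r leq_add // ?leq_mul2l ?leq_bin2l ?h ?orbT //.
Qed.

Definition quad_incr (j n : nat) : nat := (c * j * n + (quadn j - e))%N.

Lemma quadnD n j : quadn (n + j) = (quadn n + quad_incr j n)%N.
Proof.
have ej : (e <= quadn j)%N by rewrite /quadn leq_addl.
move: ej; rewrite /quad_incr /quadn bin2D; nia.
Qed.

Definition quad_gap (i k n : nat) : nat := (c * (k - i) * n + (quadn k - quadn i))%N.

Lemma quad_gap_incr i k n : (i <= k)%N ->
  (quad_gap i k n + quad_incr i n = quad_incr k n)%N.
Proof.
move=> ik; have qik := quadn_mono ik.
have ei : (e <= quadn i)%N by rewrite /quadn leq_addl.
have cik : (c * (k - i) * n + c * i * n = c * k * n)%N.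
  by rewrite -mulnDl -mulnDr subnK.
move: qik ei cik; rewrite /quad_gap /quad_incr; lia.
Qed.

End QuadraticExponent.

Section PowerDifference.
Variable K : fieldType.

(* [divpow_mx M l t = \sum_(i < t) l^(t-1-i) M^i], the quotient of
   [M^t - l^t] by [M - l]. *)
Fixpoint divpow_mx s (M : 'M[K]_s) (l : K) (t : nat) : 'M[K]_s :=
  if t is t'.+1 then M ^+ t' + l *: divpow_mx M l t' else 0.

Lemma divpow_mxE s (M : 'M[K]_s) l t :
  M ^+ t = (l ^+ t)%:M + (M - l%:M) *m divpow_mx M l t.
Proof.
elim: t => [|t IH]; first by rewrite /= mulmx0 addr0 expr0.
have E : (M - l%:M) *m divpow_mx M l t = M ^+ t - (l ^+ t)%:M.
  by rewrite [M ^+ t in RHS]IH addrAC subrr add0r.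
rewrite /= mulmxDr -scalemxAr E mulmxBl mul_scalar_mx scalerBr scale_scalar_mx -exprS.
rewrite exprS -mulmxE.
by rewrite -(addrA (M *m M ^+ t)) addKr subrKC.
Qed.

Lemma expmx_block_divpow s (M : 'M[K]_s) l t :
  (block_mx M 1%:M 0 l%:M : 'M_(s + s)) ^+ t
  = block_mx (M ^+ t) (divpow_mx M l t) 0 (l ^+ t)%:M.
Proof.
elim: t => [|t IH]; first by rewrite !expr0 /= -scalar_mx_block.
rewrite exprSr IH -mulmxE mulmx_block /= !(mulmx0, mul0mx, addr0, add0r, mulmx1).
by rewrite mul_mx_scalar -scalar_mxM -exprSr mulmxE -exprSr.
Qed.

Lemma mxpow_mx_divpow s (M : 'M[K]_s) l p r :
  mxpow_mx (fun n => divpow_mx M l (p * n + r)).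
Proof.
pose Bl : 'M_(s + s) := block_mx M 1%:M 0 l%:M.
have corner t : divpow_mx M l t = row_mx 1%:M 0 *m Bl ^+ t *m col_mx 0 1%:M.
  rewrite expmx_block_divpow mul_row_block.
  rewrite !(mulmx0, mul0mx, addr0, add0r, mul1mx) mul_row_col.
  by rewrite mulmx0 add0r mulmx1.
move=> i j; apply: (@mxpow_seq_ev _
  (fun n => (row_mx 1%:M 0 *m Bl ^+ (p * n + r) *m col_mx 0 1%:M) i j)).
  exact: (mxpow_seq_affine p r (mxpow_seq_entry _ _ _ _ _)).
by exists 0%N => n _; rewrite corner.
Qed.

End PowerDifference.

Section Reduction.
Variables (K : fieldType) (c d e : nat).

(* The reduction step.  The rows of [B] span an [M]-invariant space on which
   [M] acts as [M'], and [w (M - l)] lies in that space. *)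
Variables (s r : nat) (M : 'M[K]_s) (l : K) (B : 'M[K]_(r, s)) (M' : 'M[K]_r).
Hypothesis B_intertwines : forall t, B *m M ^+ t = M' ^+ t *m B.
Variables (w : 'rV[K]_s) (w' : 'rV[K]_r).
Hypothesis w_factors : w *m (M - l%:M) = w' *m B.

(* Splitting [M^(Q+t)] as [M^Q (l^t + (M - l) divpow_mx M l t)]. *)
Lemma expmx_split Q t (X : 'cV[K]_s) :
  w *m M ^+ (Q + t) *m X =
    l ^+ t *: (w *m M ^+ Q *m X) + w' *m M' ^+ Q *m (B *m (divpow_mx M l t *m X)).
Proof.
have commA : (M - l%:M) *m M ^+ Q = M ^+ Q *m (M - l%:M).
  rewrite mulmxBl mulmxBr mul_mx_scalar mul_scalar_mx; congr (_ - _).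
  by rewrite mulmxE -exprS exprSr.
rewrite exprD -mulmxE [M ^+ t](divpow_mxE _ l) (mulmxDr (M ^+ Q)) (mulmxDr w) mulmxDl.
rewrite mul_mx_scalar -scalemxAr -scalemxAl; congr (_ + _).
by rewrite !mulmxA -(mulmxA w) -commA mulmxA w_factors -(mulmxA w') B_intertwines !mulmxA.
Qed.

(* Let [u] satisfy [u (n + k) = \sum_i chi i u (n + i)] and [g n = w M^(q n) u n]. *)
Variables (k : nat) (chi : 'I_k -> K) (u : nat -> 'cV[K]_s).

Let g n := (w *m M ^+ quadn c d e n *m u n) 0 0.

(* The recurrence for [g] obtained by eliminating the [l]-part ... *)
Definition reduction_terms : seq ((nat -> K) * nat) :=
  [seq ((fun n => chi i * l ^+ quad_gap c d e i k n), nat_of_ord i) | i <- index_enum 'I_k].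

Lemma reduction_terms_rec : rec_terms k reduction_terms.
Proof.
move=> p /List.in_map_iff [i [<- _]] /=; split => //.
exact/mxpow_seq_scale/mxpow_seq_geom.
Qed.

(* ... whose residual has the same shape for [M'], with the following column
   sequence in place of [u]. *)
Definition reduced_col (n : nat) : 'cV[K]_r :=
  B *m (divpow_mx M l (quad_incr c d e k n) *m u (n + k)%N
    + \sum_(i < k) (- chi i * l ^+ quad_gap c d e i k n) *:
        (divpow_mx M l (quad_incr c d e i n) *m u (n + i)%N)).

Lemma mxpow_mx_reduced_col : mxpow_mx u -> mxpow_mx reduced_col.
Proof.
move=> hu; apply: mxpow_mx_mul; first exact: mxpow_mx_const.
apply: mxpow_mx_add.
  by apply: mxpow_mx_mul; [exact: mxpow_mx_divpow | exact: mxpow_mx_shift].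
apply: mxpow_mx_sum => i; apply: mxpow_mx_scale.
  exact/mxpow_seq_scale/mxpow_seq_geom.
by apply: mxpow_mx_mul; [exact: mxpow_mx_divpow | exact: mxpow_mx_shift].
Qed.

(* Wherever the recurrence of [u] holds, the residual of [g] is
   [w' M'^(q n) reduced_col n]: the [l]-parts cancel since
   [chi i l^(gap i) l^(incr i) = chi i l^(incr k)]. *)
Lemma reduction_identity n :
  u (n + k)%N = \sum_(i < k) chi i *: u (n + i)%N ->
  g (n + k)%N - \sum_(p <- reduction_terms) p.1 n * g (n + p.2)%N =
    (w' *m M' ^+ quadn c d e n *m reduced_col n) 0 0.
Proof.
move=> u_rec.
set Q := quadn c d e n; set t := quad_incr c d e.
pose a (i : 'I_k) := chi i * l ^+ quad_gap c d e i k n.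
pose X j := w *m M ^+ Q *m u (n + j)%N.
pose Y j := w' *m M' ^+ Q *m (B *m (divpow_mx M l (t j n) *m u (n + j)%N)).
have split j : w *m M ^+ quadn c d e (n + j) *m u (n + j)%N = l ^+ t j n *: X j + Y j.
  by rewrite quadnD expmx_split.
have X_rec : X k = \sum_(i < k) chi i *: X i.
  by rewrite /X u_rec mulmx_sumr; apply: eq_bigr => i _; rewrite scalemxAr.
have coef (i : 'I_k) : a i * l ^+ t i n = chi i * l ^+ t k n.
  by rewrite -mulrA -exprD quad_gap_incr // ltnW.
have key : w *m M ^+ quadn c d e (n + k) *m u (n + k)%N
      - \sum_(i < k) a i *: (w *m M ^+ quadn c d e (n + i) *m u (n + i)%N)
    = w' *m M' ^+ Q *m reduced_col n.
  rewrite split; under eq_bigr => i _ do rewrite split scalerDr scalerA coef mulrC -scalerA.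
  rewrite big_split /= -scaler_sumr -X_rec opprD addrACA subrr add0r.
  rewrite /reduced_col mulmxA mulmxDr /Y mulmxA -mulmxA; congr (_ + _).
  rewrite mulmx_sumr -sumrN; apply: eq_bigr => i _.
  by rewrite -scalemxAr !mulmxA mulNr scaleNr.
rewrite big_map -key mxE [X in _ = _ + X]mxE summxE; congr (_ - _).
by apply: eq_bigr => i _; rewrite mxE.
Qed.

End Reduction.

Section QuadraticPowers.
Variable K : closedFieldType.

(* For an eigenvalue [l] of [M], the row space of [M - l] is a proper
   [M]-invariant subspace; [B] is a basis of it and [M'] the restriction of [M]. *)
Lemma eigen_reduction s (M : 'M[K]_s.+1) :
  exists (l : K) r (B : 'M[K]_(r, s.+1)) (M' : 'M[K]_r),
    [/\ (r < s.+1)%N, forall t, B *m M ^+ t = M' ^+ t *m B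
      & forall w : 'rV[K]_s.+1, exists w' : 'rV[K]_r, w *m (M - l%:M) = w' *m B].
Proof.
have [l hl] : exists l, root (char_poly M) l.
  by apply/closed_rootP; rewrite size_char_poly.
have /eigenvalueP [v0 hv0 v0nz] : eigenvalue M l by rewrite eigenvalue_root_char.
set A := M - l%:M.
have [M' hM'] : exists M', row_base A *m M = M' *m row_base A.
  apply/submxP; rewrite eq_row_base (eqmxMr M (eq_row_base A)).
  have -> : A *m M = M *m A by rewrite /A mulmxBl mulmxBr mul_mx_scalar mul_scalar_mx.
  exact: submxMl.
exists l, (\rank A), (row_base A), M'; split.
- rewrite ltn_neqAle rank_leq_row andbT; apply/negP => A_free.
  have := @row_free_inj _ _ _ _ A A_free v0 0.
  rewrite mul0mx /A mulmxBr hv0 mul_mx_scalar subrr => /(_ erefl) v00.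
  by move: v0nz; rewrite v00 eqxx.
- elim=> [|t IHt]; first by rewrite !expr0 mulmx1 mul1mx.
  by rewrite exprSr -mulmxE mulmxA IHt -mulmxA hM' mulmxA mulmxE -exprSr.
- by move=> w; apply/submxP; rewrite eq_row_base submxMl.
Qed.

Lemma quad_power_rec (c d e : nat) s (M : 'M[K]_s) (w : 'rV[K]_s)
    (u : nat -> 'cV[K]_s) :
  mxpow_mx u -> mxpow_rec (fun n => (w *m M ^+ quadn c d e n *m u n) 0 0).
Proof.
elim/ltn_ind: s M w u => s IH M w u hu.
case: s IH M w u hu => [|s] IH M w u hu.
  by apply: mxpow_rec_zero => n; rewrite mxE big_ord0.
have [l [r [B [M' [ltrs B_intertwines w_factors]]]]] := eigen_reduction M.
have [w' hw] := w_factors w.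
have [k [chi [N u_rec]]] := mxpow_mx_recurrence hu.
apply: (mxpow_rec_compose (@reduction_terms_rec _ c d e l _ chi)).
apply: (mxpow_rec_ev (IH r ltrs M' w' _ (mxpow_mx_reduced_col c d e M l B chi hu))).
by exists N => n hn; rewrite (reduction_identity c d e B_intertwines hw) ?u_rec.
Qed.

End QuadraticPowers.

Lemma quad_index_shift (c : nat) (d e : int) (N0 : nat) : (0 < c)%N ->
  exists n0 D E : nat, (N0 <= E)%N /\
    forall n, quad_index c d e (n + n0) = (quadn c D E n)%:Z.
Proof.
move=> c_gt0; set X := (`|d| + `|e| + N0)%N; set n0 := (2 * X).+1.
have bin_n0 : 'C(n0, 2) = (n0 * X)%N.
  by rewrite bin2odd /n0 /= mul2n ?odd_double // doubleK.
have n0_le : (n0 <= c * n0)%N by rewrite leq_pmull.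
have X_le : (n0 * X <= c * (n0 * X))%N by rewrite leq_pmull.
have [D hD] : exists D : nat, D%:Z = (c * n0)%:Z + d.
  exists (absz ((c * n0)%:Z + d)); rewrite abszE ger0_norm //; lia.
have [E hE] : exists E : nat, E%:Z = quad_index c d e n0.
  by exists (absz (quad_index c d e n0)); rewrite abszE ger0_norm // /quad_index bin_n0; nia.
exists n0, D, E; split.
  by rewrite -lez_nat hE /quad_index bin_n0; nia.
move=> n; rewrite /quadn !PoszD !PoszM hD hE /quad_index bin2D !PoszD !PoszM; ring.
Qed.

Lemma C2finite_quad_subseq (K : closedFieldType) (a : nat -> K) (ha : Cfinite a)
    (c : nat) (d e : int) : (0 < c)%N ->
  forall b : nat -> K,
    (forall n : nat, 0 <= quad_index c d e n -> b n = a `|quad_index c d e n|%N) ->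
    C2finite b.
Proof.
move=> c_gt0 b hb.
have [N0 [k [M [x [y Ha]]]]] := Cfinite_mxpow_seq ha.
have [n0 [D [E [N0_le shift_q]]]] := quad_index_shift d e N0 c_gt0.
apply/mxpow_rec_C2finite/(@mxpow_rec_unshift _ _ n0).
apply: (mxpow_rec_ev (quad_power_rec c D (E - N0) M x (mxpow_mx_const y))).
exists 0%N => n _.
rewrite hb ?shift_q // absz_nat Ha; last by apply: leq_trans N0_le (leq_addl _ _).
by rewrite /quadn; congr (_ _ _ _); do 2 congr (_ *m _); congr (_ ^+ _); lia.
Qed.

Lemma bin2_mul2 n : ('C(n, 2) * 2 = n * n.-1)%N.
Proof.
elim: n => [|n IH] //; rewrite binS bin1 mulnDl IH; case: n {IH} => [|n] //=; nia.
Qed.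

Unset Implicit Arguments.

(* The theorem. *)
Theorem theorem1 (K : closedFieldType) (hK : [pchar K] =i pred0)
    (a : nat -> K) (ha : Cfinite a) :
  (forall (c : nat) (d e : int), (0 < c)%N ->
     forall b : nat -> K,
       (forall n : nat, 0 <= quad_index c d e n ->
          b n = a `|quad_index c d e n|%N) ->
       C2finite b)
  /\ C2finite (fun n => a (n ^ 2)%N)
  /\ C2finite (fun n => a 'C(n, 2)).
Proof.
split; first exact: C2finite_quad_subseq.
split.
  (* n^2 = 2 C(n,2) + n *)
  apply: (@C2finite_quad_subseq K a ha 2 1 0 erefl) => n _; congr a.
  rewrite /quad_index mul1r addr0 -PoszD absz_nat.
  by have := bin2_mul2 n; case: n => [|n] //=; nia.
apply: (@C2finite_quad_subseq K a ha 1 0 0 erefl) => n _; congr a.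
by rewrite /quad_index mul0r !addr0 absz_nat mul1n.
Qed.
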